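(* Let $m\ge1$, $q=2^m$, $n=3$, let $a,b,c\in\mathbb F_{q^3}$, let $k$ be an integer with $0\le k<m$, and let $L(x)=\big(ax+bx^q+cx^{q^2}\big)^{2^k}$. Let $s=\gcd(k-1,m)$. Then $\mathrm{Tr}(x^{q+1})+L(x)$ is a permutation polynomial of $\mathbb F_{q^3}$ if and only if $(a+b+c)^{\frac{q-1}{2^s-1}}\ne1$ and either (a) $a+b+c\in\mathbb F_q^*$ and $a^{q^2+q+1}+b^{q^2+q+1}+c^{q^2+q+1}+\mathrm{Tr}\big(ab^qc^{q^2}\big)\ne0$, or (b) $a+b+c=0$ and $\mathrm{Tr}(a^{q+1}+a^qb+b^{q+1})\ne0$.
   Context: $\mathrm{Tr}(x)=x+x^q+x^{q^2}$ is the trace map of $\mathbb F_{q^3}$ over $\mathbb F_q$. Polynomials are regarded as maps on $\mathbb F_{q^3}$; a permutation polynomial is one inducing a bijection. *)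

From mathcomp Require Import all_boot all_order all_algebra all_field.
Set Implicit Arguments. Unset Strict Implicit. Unset Printing Implicit Defensive.
Import GRing.Theory.
Local Open Scope ring_scope.

Definition Tr (F : finFieldType) (q : nat) (x : F) : F :=
  x + x ^+ q + x ^+ (q ^ 2)%N.

Definition inFq (F : finFieldType) (q : nat) (x : F) : bool := x ^+ q == x.

(* s = gcd(k-1, m), with k-1 computed in the integers (so s = 1 if k = 0). *)
Definition sgcd (k m : nat) : nat := `|gcdz (k%:Z - 1) m%:Z|%N.

From mathcomp Require Import all_boot all_order all_algebra all_field.
From mathcomp Require Import cyclic ring zify.
Set Implicit Arguments. Unset Strict Implicit. Unset Printing Implicit Defensive.
Import GRing.Theory.
Local Open Scope ring_scope.

(* Put L(x) = a x + b x^q + c x^(q^2), t = a + b + c and f(x) = Tr(x^(q+1)) + L(x)^(2^k).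
   In characteristic 2, f(x + y) = f(x) + f(y) + Tr(x (y^q + y^(q^2))), and x |-> Tr(x z)
   maps onto F_q whenever z != 0.  Hence f permutes F_(q^3) iff (A) f has no nonzero
   root in F_q and (B) L^-1(F_q) is contained in F_q.  On F_q, f(y) = y^2 + (t y)^(2^k),
   so (A) is a solvability question in the cyclic group F_q^*, which produces the gcd
   condition.  (B) forces t to lie in F_q; it says that L is injective when t != 0 and
   that L + Tr is injective when t = 0.  A q-linearised polynomial is injective iff its
   Dickson determinant is nonzero, and these two determinants evaluate to the two
   expressions of the statement. *)

Lemma gcdn_expn_sub1 (p a b : nat) :
  (0 < p)%N -> gcdn (p ^ a - 1) (p ^ b - 1) = (p ^ gcdn a b - 1)%N.
Proof.
move=> p_gt0; elim: {a b}(a + b)%N {-2}a {-2}b (leqnn (a + b)) => [|n IHn] a b.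
  by rewrite leqn0 addn_eq0 => /andP[/eqP-> /eqP->].
wlog le_ba : a b / (b <= a)%N.
  move=> H; case/orP: (leq_total b a) => [/H//|/H le_ab].
  by rewrite gcdnC [gcdn a b]gcdnC addnC.
case: b le_ba => [|b] le_ba ab_le; first by rewrite gcdn0 subnn gcdn0.
have [d ea] : exists d, a = (d + b.+1)%N by exists (a - b.+1)%N; rewrite subnK.
subst a.
have pd_gt0 : (0 < p ^ d)%N by rewrite expn_gt0 p_gt0.
have pb_gt0 : (0 < p ^ b.+1)%N by rewrite expn_gt0 p_gt0.
have -> : (p ^ (d + b.+1) - 1 = p ^ d * (p ^ b.+1 - 1) + (p ^ d - 1))%N.
  rewrite expnD; move: (p ^ d)%N (p ^ b.+1)%N pd_gt0 pb_gt0 => X Y X0 Y0.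
  by rewrite mulnBr muln1 addnBA ?subnK // leq_pmulr.
rewrite gcdnC gcdnMDl [gcdn (d + _) _]gcdnC gcdnDr IHn ?[gcdn d _]gcdnC //; lia.
Qed.

Lemma sgcdE (k m : nat) : (0 < m)%N -> sgcd k m = gcdn (k + m - 1) m.
Proof.
move=> m_gt0; rewrite /sgcd gcdzC -gcdzDr gcdzC.
by rewrite (_ : k%:Z - 1 + m%:Z = (k + m - 1)%N :> int) //; lia.
Qed.

Lemma exists_unity_root_mul_expr_eq1 (R : fieldType) (N n : nat) (z u : R) :
  N.-primitive_root z -> u ^+ N = 1 ->
  (exists2 y, y ^+ N = 1 & u * y ^+ n = 1) <-> u ^+ (N %/ gcdn N n) = 1.
Proof.
move=> z_prim uN1; have N_gt0 := prim_order_gt0 z_prim.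
set d := gcdn N n; have dN : (d %| N)%N := dvdn_gcdl N n.
have dn : (d %| n)%N := dvdn_gcdr N n.
split=> [[y yN1 uyn1] | ud1].
  have <- : (u * y ^+ n) ^+ (N %/ d) = u ^+ (N %/ d).
    rewrite exprMn -exprM (_ : n * (N %/ d) = N * (n %/ d))%N.
      by rewrite exprM yN1 expr1n mulr1.
    by rewrite !muln_divA // mulnC.
  by rewrite uyn1 expr1n.
have [[i _] /= u_eq] := prim_rootP z_prim uN1.
have Nd_gt0 : (0 < N %/ d)%N by rewrite divn_gt0 ?(dvdn_leq N_gt0) // gcdn_gt0 N_gt0.
have [l i_eq] : exists l, i = (l * d)%N.
  apply/dvdnP; rewrite -(dvdn_pmul2r Nd_gt0) [(d * _)%N]mulnC divnK //.
  by rewrite (prim_order_dvd z_prim) exprM -u_eq ud1.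
have [km kn Bez _] := egcdnP n N_gt0.
exists (z ^+ (kn * l)).
  by rewrite -exprM mulnC exprM (prim_expr_order z_prim) expr1n.
rewrite u_eq -exprM -exprD; apply/eqP; rewrite -(prim_order_dvd z_prim) i_eq.
have -> : (l * d + kn * l * n = l * (kn * n + d))%N by ring.
by rewrite -Bez mulnA dvdn_mull.
Qed.

Lemma additive_injP (U V : zmodType) (g : U -> V) :
  {morph g : x y / x + y} -> injective g <-> (forall x, g x = 0 -> x = 0).
Proof.
move=> gD; have g0 : g 0 = 0 by apply: (addIr (g 0)); rewrite -gD !add0r.
have gB x y : g (x - y) = g x - g y.
  by apply: (addIr (g y)); rewrite -gD !subrK.
split=> [g_inj x gx0 | g_ker x y gxy]; first by apply: g_inj; rewrite gx0 g0.
by apply/eqP; rewrite -subr_eq0; apply/eqP/g_ker; rewrite gB gxy subrr.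
Qed.

Definition col3 (R : nmodType) (u0 u1 u2 : R) : 'cV[R]_3 :=
  \col_(i < 3) nth 0 [:: u0; u1; u2] i.

Lemma col3_surj (R : nmodType) (v : 'cV[R]_3) : exists u0 u1 u2, v = col3 u0 u1 u2.
Proof.
exists (v ord0 0), (v (lift ord0 ord0) 0), (v ord_max 0).
by apply/colP => -[[|[|[|//]]] i_lt3]; rewrite mxE /=; congr (v _ _); apply: val_inj.
Qed.

Lemma col3_eq0 (R : nmodType) (u0 u1 u2 : R) :
  (col3 u0 u1 u2 == 0) = [&& u0 == 0, u1 == 0 & u2 == 0].
Proof.
apply/eqP/and3P => [/colP u_eq0 | [/eqP-> /eqP-> /eqP->]].
  split; apply/eqP;
    [move: (u_eq0 ord0) | move: (u_eq0 (lift ord0 ord0)) | move: (u_eq0 ord_max)];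
    by rewrite !mxE.
by apply/colP => -[[|[|[|//]]] i_lt3]; rewrite !mxE.
Qed.

Section CubicExtension.

Variables (F : finFieldType) (q : nat).
Hypotheses (qF : [pchar F].-nat q) (cardF : #|F| = (q ^ 3)%N).

Lemma q_gt1 : (1 < q)%N.
Proof.
have : (1 < #|F|)%N by rewrite (cardD1 0) (cardD1 1) !inE oner_neq0.
by rewrite cardF; case: q => [|[|]].
Qed.

Lemma exprqD (x y : F) : (x + y) ^+ q = x ^+ q + y ^+ q.
Proof. exact: exprDn_pchar. Qed.

Lemma exprqN (x : F) : (- x) ^+ q = - x ^+ q.
Proof. exact: exprNn_pchar. Qed.

Lemma expr0q : (0 : F) ^+ q = 0.
Proof. by rewrite expr0n gtn_eqF // ltnW // q_gt1. Qed.

Lemma exprqq (x : F) : (x ^+ q) ^+ q = x ^+ (q ^ 2).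
Proof. by rewrite -exprM mulnn. Qed.

Lemma exprq2q (x : F) : (x ^+ (q ^ 2)) ^+ q = x.
Proof. by rewrite -exprM -expnSr -cardF expf_card. Qed.

Lemma exprqq2 (x : F) : (x ^+ q) ^+ (q ^ 2) = x.
Proof. by rewrite -exprM mulnC -expnSr -cardF expf_card. Qed.

Lemma exprq2q2 (x : F) : (x ^+ (q ^ 2)) ^+ (q ^ 2) = x ^+ q.
Proof. by rewrite -exprqq exprq2q. Qed.

Lemma exprq2D (x y : F) : (x + y) ^+ (q ^ 2) = x ^+ (q ^ 2) + y ^+ (q ^ 2).
Proof. by rewrite -!exprqq !exprqD. Qed.

Lemma exprq2N (x : F) : (- x) ^+ (q ^ 2) = - x ^+ (q ^ 2).
Proof. by rewrite -!exprqq !exprqN. Qed.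

Definition frobE :=
  (exprqD, exprq2D, exprqN, exprq2N, exprMn, expr1n, exprqq, exprq2q, exprqq2, exprq2q2).

Lemma Tr0 : Tr q (0 : F) = 0.
Proof. by rewrite /Tr -exprqq !expr0q !addr0. Qed.

Lemma inFq0 : inFq q (0 : F).
Proof. by rewrite /inFq expr0q. Qed.

Lemma inFqD (x y : F) : inFq q x -> inFq q y -> inFq q (x + y).
Proof. by move=> /eqP xq /eqP yq; rewrite /inFq exprqD xq yq. Qed.

Lemma inFqDl (x y : F) : inFq q x -> inFq q (x + y) = inFq q y.
Proof.
move=> xFq; apply/idP/idP; last exact: inFqD.
by rewrite -{2}(addKr x y); apply: inFqD; rewrite /inFq exprqN (eqP xFq).
Qed.

Lemma inFq_Tr (x : F) : inFq q (Tr q x).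
Proof. by rewrite /inFq /Tr !frobE addrC addrA. Qed.

Lemma TrMl (al x : F) : inFq q al -> Tr q (al * x) = al * Tr q x.
Proof. by move=> /eqP alq; rewrite /Tr !exprMn -!exprqq !alq; ring. Qed.

Lemma inFq_unity (y : F) : (inFq q y && (y != 0)) = (y ^+ (q - 1) == 1).
Proof.
have q_gt0 : (0 < q)%N by rewrite ltnW // q_gt1.
rewrite /inFq; apply/andP/eqP => [[/eqP yq y0] | yq1].
  by apply: (mulIf y0); rewrite mul1r -exprSr subn1 prednK.
have y0 : y != 0.
  apply: contra_eqN yq1 => /eqP->.
  by rewrite expr0n subn_eq0 leqNgt q_gt1 eq_sym oner_eq0.
by rewrite -(subnK q_gt0) addn1 exprS yq1 mulr1 y0.
Qed.

Lemma Fq_prim_root : exists z : F, (q - 1).-primitive_root z.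
Proof.
have F1_gt0 : (0 < #|F|.-1)%N.
  by rewrite cardF -subn1 subn_gt0 -{1}(exp1n 3) ltn_exp2r // q_gt1.
have : has #|F|.-1.-primitive_root (enum (predC1 (0 : F))).
  apply: has_prim_root => //; last by rewrite -cardE cardC1.
  - apply/allP => x; rewrite mem_enum /= => x0.
    rewrite unity_rootE; apply/eqP/(mulIf x0).
    by rewrite mul1r -exprSr prednK ?expf_card // (leq_trans F1_gt0 (leq_pred _)).
  - exact: enum_uniq.
case/hasP => w _ w_prim; exists (w ^+ (#|F|.-1 %/ (q - 1))).
apply: (dvdn_prim_root w_prim); rewrite cardF -subn1.
apply/dvdnP; exists (q ^ 2 + q + 1)%N; have := q_gt1.
by rewrite !expnS expn0 muln1; nia.
Qed.

Definition qlin (a b c x : F) : F := a * x + b * x ^+ q + c * x ^+ (q ^ 2).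

Lemma qlinD (a b c : F) : {morph qlin a b c : x y / x + y}.
Proof. by move=> x y; rewrite /qlin !frobE; ring. Qed.

Lemma qlin0 (a b c : F) : qlin a b c 0 = 0.
Proof. by rewrite /qlin -exprqq !expr0q !mulr0 !addr0. Qed.

Lemma qlin_Fq (a b c y : F) : inFq q y -> qlin a b c y = (a + b + c) * y.
Proof. by move=> /eqP yq; rewrite /qlin -exprqq !yq; ring. Qed.

Lemma qlin_nonroot (a b c : F) :
  [|| a != 0, b != 0 | c != 0] -> exists x, qlin a b c x != 0.
Proof.
move=> abc; have lt1q := q_gt1.
have [q_neq1 q2_neq1 q2_neqq] : [/\ q != 1, q ^ 2 != 1 & q ^ 2 != q]%N.
  by split; rewrite -?mulnn; apply/eqP; nia.
pose p : {poly F} := a *: 'X + b *: 'X^q + c *: 'X^(q ^ 2).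
have coef_p i : p`_i = a * (i == 1)%N%:R + b * (i == q)%N%:R + c * (i == q ^ 2)%N%:R.
  by rewrite !coefD !coefZ coefX !coefXn.
have p_neq0 : p != 0.
  apply: contraTneq abc => p0.
  have := coef_p 1%N; have := coef_p q; have := coef_p (q ^ 2)%N.
  rewrite p0 !coef0 !eqxx ![(1 == _)%N]eq_sym [(q == q ^ 2)%N]eq_sym.
  rewrite (negPf q_neq1) (negPf q2_neq1) (negPf q2_neqq) !mulr0 !mulr1 !addr0 !add0r.
  by move=> <- <- <-; rewrite eqxx.
have size_p : (size p <= (q ^ 2).+1)%N.
  apply/leq_sizeP => j lt_q2j; rewrite coef_p.
  have [j_neq1 j_neqq j_neqq2] : [/\ j != 1, j != q & j != q ^ 2]%N.
    by rewrite -mulnn in lt_q2j *; split; apply/eqP; nia.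
  by rewrite (negPf j_neq1) (negPf j_neqq) (negPf j_neqq2) !mulr0 !addr0.
have : ~~ all (root p) (enum F).
  apply: contraTN size_p => roots; rewrite -ltnNge.
  apply: leq_ltn_trans (max_poly_roots p_neq0 roots (enum_uniq F)).
  by rewrite -cardE cardF -mulnn !expnS expn0 muln1; nia.
by case/allPn => x _; rewrite /root /p !hornerE; exists x.
Qed.

Lemma Tr_surj (z r : F) : z != 0 -> inFq q r -> exists x, Tr q (x * z) = r.
Proof.
move=> z_neq0 rFq; have [w] : exists w, qlin 1 1 1 w != 0.
  by apply: qlin_nonroot; rewrite oner_neq0.
rewrite /qlin !mul1r -/(Tr q w) => Trw_neq0.
exists (r / Tr q w * w / z).
by rewrite mulfVK // TrMl ?divfK // /inFq exprMn exprVn (eqP rFq) (eqP (inFq_Tr w)).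
Qed.

Definition dickson_mx (a b c : F) : 'M[F]_3 :=
  \matrix_(i < 3, j < 3) nth 0 [:: a; b; c] ((3 + j - i) %% 3) ^+ (q ^ i).

Definition frob_col (x : F) : 'cV[F]_3 := col3 x (x ^+ q) (x ^+ (q ^ 2)).

Lemma dickson_mx_col3 (a b c u0 u1 u2 : F) :
  dickson_mx a b c *m col3 u0 u1 u2 =
  col3 (a * u0 + b * u1 + c * u2) (c ^+ q * u0 + a ^+ q * u1 + b ^+ q * u2)
       (b ^+ (q ^ 2) * u0 + c ^+ (q ^ 2) * u1 + a ^+ (q ^ 2) * u2).
Proof.
apply/colP => -[[|[|[|//]]] i_lt3];
  by rewrite !mxE !big_ord_recl big_ord0 !mxE /= ?expn0 ?expn1 ?expr1 addr0 !addrA.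
Qed.

Lemma dickson_mxE (a b c x : F) :
  dickson_mx a b c *m frob_col x = frob_col (qlin a b c x).
Proof. by rewrite dickson_mx_col3 /frob_col /qlin !frobE; congr col3; ring. Qed.

Lemma det_dickson_mx (a b c : F) :
  \det (dickson_mx a b c) = a ^+ (q ^ 2 + q + 1) + b ^+ (q ^ 2 + q + 1)
    + c ^+ (q ^ 2 + q + 1) - Tr q (a * b ^+ q * c ^+ (q ^ 2)).
Proof.
rewrite (expand_det_row _ 0) !big_ord_recl big_ord0 /cofactor.
rewrite !(expand_det_row _ 0) !big_ord_recl !big_ord0 /cofactor !det_mx11 !mxE /=.
rewrite !expn0 !expn1 !expr1 /Tr !exprD !expr1 !frobE; ring.
Qed.

Lemma dickson_mx_ker (a b c u0 u1 u2 l : F) :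
  dickson_mx a b c *m col3 u0 u1 u2 = 0 ->
  qlin a b c (qlin u0 (u2 ^+ q) (u1 ^+ (q ^ 2)) l) = 0.
Proof.
move=> /eqP; rewrite dickson_mx_col3 col3_eq0 => /and3P[/eqP D0 /eqP D1 /eqP D2].
have -> : qlin a b c (qlin u0 (u2 ^+ q) (u1 ^+ (q ^ 2)) l) =
    l * (a * u0 + b * u1 + c * u2)
    + (l * (b ^+ (q ^ 2) * u0 + c ^+ (q ^ 2) * u1 + a ^+ (q ^ 2) * u2)) ^+ q
    + (l * (c ^+ q * u0 + a ^+ q * u1 + b ^+ q * u2)) ^+ (q ^ 2).
  by rewrite /qlin !frobE; ring.
by rewrite D0 D1 D2 !mulr0 expr0q -exprqq !expr0q !addr0.
Qed.

Lemma qlin_injP (a b c : F) : injective (qlin a b c) <-> \det (dickson_mx a b c) != 0.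
Proof.
rewrite (additive_injP (qlinD a b c)); split=> [qlin_ker | det_neq0 x qx0].
  apply/negP; rewrite -det_tr => /det0P[v]; rewrite -trmx_eq0 => v_neq0.
  move/(congr1 trmx); rewrite trmx_mul trmxK trmx0.
  have [u0 [u1 [u2 v_eq]]] := col3_surj v^T; rewrite v_eq => /dickson_mx_ker D_ker.
  have [l] : exists l, qlin u0 (u2 ^+ q) (u1 ^+ (q ^ 2)) l != 0.
    apply: qlin_nonroot; rewrite !expf_eq0 !expn_gt0 ltnW ?q_gt1 //=.
    by move: v_neq0; rewrite v_eq col3_eq0; do 3!case: eqP.
  by rewrite (qlin_ker _ (D_ker l)) eqxx.
have D_unit : dickson_mx a b c \in unitmx by rewrite unitmxE unitfE.
have := mulKmx D_unit (frob_col x); rewrite dickson_mxE qx0.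
have -> : frob_col 0 = 0 by apply/eqP; rewrite col3_eq0 -exprqq !expr0q eqxx.
by rewrite mulmx0 => /esym/eqP; rewrite col3_eq0 => /and3P[/eqP].
Qed.

Lemma det_dickson_mx_add1 (a b c : F) : a + b + c = 0 ->
  \det (dickson_mx (a + 1) (b + 1) (c + 1)) =
  Tr q (a ^+ (q + 1) + a ^+ q * b + b ^+ (q + 1)) *+ 3.
Proof.
move=> abc0; have -> : c = - (a + b) by apply/eqP; rewrite -addr_eq0 addrC abc0.
by rewrite det_dickson_mx /Tr !exprD !expr1 !frobE; ring.
Qed.

Definition qlin_preim_Fq (a b c : F) : Prop := forall y, inFq q (qlin a b c y) -> inFq q y.

Lemma qlin_preim_Fq_sum (a b c : F) : qlin_preim_Fq a b c -> inFq q (a + b + c).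
Proof.
move=> preimFq; case: (pickP (fun z => (z != 0) && (qlin a b c z == 0))).
  move=> z /andP[z_neq0 /eqP qz0]; have zFq : inFq q z by rewrite preimFq // qz0 inFq0.
  move: qz0; rewrite qlin_Fq // => /eqP; rewrite mulf_eq0 (negPf z_neq0) orbF.
  by move/eqP->; exact: inFq0.
move=> ker0; have /injF_bij[g gK Kg] : injective (qlin a b c).
  apply/(additive_injP (qlinD a b c)) => x qx0.
  by apply/eqP; move: (ker0 x); rewrite qx0 eqxx andbT => /negbFE.
have g1Fq : inFq q (g 1) by rewrite preimFq // Kg /inFq expr1n.
have := Kg 1; rewrite qlin_Fq // => tg1.
by rewrite -[a + b + c]invrK (mulr1_eq tg1) /inFq exprVn (eqP g1Fq).
Qed.

Lemma qlin_preim_Fq_unit (a b c : F) : inFq q (a + b + c) -> a + b + c != 0 ->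
  qlin_preim_Fq a b c <-> injective (qlin a b c).
Proof.
move=> tFq t_neq0; split=> [preimFq | qlin_inj y qyFq].
  apply/(additive_injP (qlinD a b c)) => z qz0.
  have zFq : inFq q z by rewrite preimFq // qz0 inFq0.
  by move: qz0; rewrite qlin_Fq // => /eqP; rewrite mulf_eq0 (negPf t_neq0) => /eqP.
have tyFq : inFq q (qlin a b c y / (a + b + c)).
  by rewrite /inFq exprMn exprVn (eqP qyFq) (eqP tFq).
have <- : qlin a b c y / (a + b + c) = y.
  by apply: qlin_inj; rewrite qlin_Fq // mulrC divfK.
by [].
Qed.

Section Char2.

Variable m : nat.
Hypothesis q_eq : q = (2 ^ m)%N.

Let m_gt0 : (0 < m)%N.
Proof. by have := q_gt1; rewrite q_eq lt0n; apply: contraTneq => ->. Qed.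

Let pchar2F : 2 \in [pchar F].
Proof. by move: qF; rewrite q_eq pnatX eqn0Ngt m_gt0 orbF pnatE. Qed.

Lemma expr2kD (k : nat) (x y : F) : (x + y) ^+ (2 ^ k) = x ^+ (2 ^ k) + y ^+ (2 ^ k).
Proof. by apply: exprDn_pchar; rewrite pnatX pnatE ?pchar2F. Qed.

Lemma expr2k_inj (k : nat) : injective (fun x : F => x ^+ (2 ^ k)).
Proof.
move=> x y /= /eqP; rewrite -subr_eq0 GRing.subr_pchar2 // -expr2kD expf_eq0 => /andP[_].
by rewrite -GRing.subr_pchar2 // subr_eq0 => /eqP.
Qed.

Lemma Tr_Fq (y : F) : inFq q y -> Tr q y = y.
Proof. by move=> /eqP yq; rewrite /Tr -exprqq !yq addrr_pchar2 // add0r. Qed.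

Lemma inFqX2k (k : nat) (x : F) : inFq q (x ^+ (2 ^ k)) = inFq q x.
Proof. by rewrite /inFq exprAC (inj_eq (@expr2k_inj k)). Qed.

Lemma frob_sum_eq0 (y : F) : (y ^+ q + y ^+ (q ^ 2) == 0) = inFq q y.
Proof.
rewrite addr_eq0 GRing.oppr_pchar2 // /inFq.
apply/eqP/eqP => [/(congr1 (fun x : F => x ^+ (q ^ 2))) | yq].
  by rewrite exprqq2 exprq2q2.
by rewrite -exprqq !yq.
Qed.

Definition fL (k : nat) (a b c x : F) : F :=
  Tr q (x ^+ (q + 1)) + qlin a b c x ^+ (2 ^ k).

Lemma fLD (k : nat) (a b c x y : F) :
  fL k a b c (x + y) = fL k a b c x + fL k a b c y + Tr q (x * (y ^+ q + y ^+ (q ^ 2))).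
Proof. by rewrite /fL qlinD expr2kD /Tr !exprD !expr1 !frobE; ring. Qed.

Lemma fL0 (k : nat) (a b c : F) : fL k a b c 0 = 0.
Proof. by rewrite /fL qlin0 !expr0n addn1 expn_eq0 /= /Tr -exprqq !expr0q !addr0. Qed.

Lemma fL_Fq (k : nat) (a b c y : F) :
  inFq q y -> fL k a b c y = y ^+ 2 + ((a + b + c) * y) ^+ (2 ^ k).
Proof.
move=> yFq; rewrite /fL qlin_Fq // exprD expr1 (eqP yFq) -expr2 Tr_Fq //.
by rewrite /inFq exprAC (eqP yFq).
Qed.

Lemma inFq_fL (k : nat) (a b c y : F) : inFq q (fL k a b c y) = inFq q (qlin a b c y).
Proof. by rewrite /fL inFqDl ?inFq_Tr // inFqX2k. Qed.

Definition fL_Fq_root_free (k : nat) (a b c : F) : Prop :=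
  forall y, inFq q y -> y != 0 -> fL k a b c y != 0.

Lemma fL_injP (k : nat) (a b c : F) :
  injective (fL k a b c) <-> fL_Fq_root_free k a b c /\ qlin_preim_Fq a b c.
Proof.
have fL_eq x y : (fL k a b c (x + y) == fL k a b c x) =
                 (fL k a b c y == Tr q (x * (y ^+ q + y ^+ (q ^ 2)))).
  rewrite fLD -addrA -{2}[fL k a b c x]addr0 (inj_eq (addrI _)).
  by rewrite addr_eq0 GRing.oppr_pchar2.
split=> [fL_inj | [root_free preimFq] x x' /esym/eqP].
  split=> [y _ | y qyFq]; first by apply: contra_neq => fy0; apply: fL_inj; rewrite fy0 fL0.
  apply: contraT => yNFq; have z_neq0 : y ^+ q + y ^+ (q ^ 2) != 0 by rewrite frob_sum_eq0.
  have fyFq : inFq q (fL k a b c y) by rewrite inFq_fL.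
  have [x Trx] := Tr_surj z_neq0 fyFq.
  have /fL_inj/eqP : fL k a b c (x + y) = fL k a b c x by apply/eqP; rewrite fL_eq Trx.
  by rewrite -{2}[x]addr0 (inj_eq (addrI x)) => /eqP y0; rewrite y0 inFq0 in yNFq.
rewrite -(subrK x x') addrC fL_eq; set y := x' - x => /eqP fy.
have yFq : inFq q y by apply: preimFq; rewrite -(inFq_fL k) fy inFq_Tr.
have fy0 : fL k a b c y = 0 by rewrite fy (eqP (etrans (frob_sum_eq0 y) yFq)) mulr0 Tr0.
case: (eqVneq y 0) => [-> | y_neq0]; first by rewrite addr0.
by have := root_free y yFq y_neq0; rewrite fy0 eqxx.
Qed.

(* On F_q the power 2^(m-1) inverts squaring, so (t y)^(2^k) = ((t y)^(2^(k+m-1)))^2;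
   this avoids a separate case for k = 0. *)
Lemma fL_Fq_eq0 (k : nat) (a b c y : F) : inFq q (a + b + c) -> inFq q y -> y != 0 ->
  (fL k a b c y == 0) =
  ((a + b + c) ^+ (2 ^ (k + m - 1)) * y ^+ (2 ^ (k + m - 1) - 1) == 1).
Proof.
move=> tFq yFq y_neq0; rewrite fL_Fq //; set t := a + b + c; set e := (k + m - 1)%N.
have tyFq : inFq q (t * y) by rewrite /inFq exprMn (eqP tFq) (eqP yFq).
have -> : (t * y) ^+ (2 ^ k) = ((t * y) ^+ (2 ^ e)) ^+ 2.
  rewrite -exprM (_ : 2 ^ e * 2 = q * 2 ^ k)%N ?exprM ?(eqP tyFq) //.
  by rewrite -expnSr q_eq -expnD /e; congr (2 ^ _)%N; lia.
rewrite addr_eq0 GRing.oppr_pchar2 // eqf_sqr GRing.oppr_pchar2 // orbb exprMn.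
have -> : y ^+ (2 ^ e) = y ^+ (2 ^ e - 1) * y by rewrite -exprSr subn1 prednK ?expn_gt0.
rewrite mulrA; apply/eqP/eqP => [y_eq | ->]; last by rewrite mul1r.
by apply: (mulIf y_neq0); rewrite mul1r -y_eq.
Qed.

Lemma fL_Fq_root_freeP (k : nat) (a b c : F) : inFq q (a + b + c) ->
  fL_Fq_root_free k a b c <-> (a + b + c) ^+ ((q - 1) %/ (2 ^ sgcd k m - 1)) != 1.
Proof.
move=> tFq; set t := a + b + c; set e := (k + m - 1)%N.
have d_eq : (2 ^ sgcd k m - 1 = gcdn (q - 1) (2 ^ e - 1))%N.
  by rewrite sgcdE // q_eq gcdn_expn_sub1 // gcdnC.
have [t0 | t_neq0] := eqVneq t 0.
  have n_gt0 : (0 < (q - 1) %/ (2 ^ sgcd k m - 1))%N.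
    have q1_gt0 : (0 < q - 1)%N by rewrite subn_gt0 q_gt1.
    by rewrite d_eq divn_gt0 ?gcdn_gt0 ?q1_gt0 // (dvdn_leq q1_gt0) ?dvdn_gcdl.
  rewrite t0 expr0n gtn_eqF // eq_sym oner_neq0; split=> // _ y yFq y_neq0.
  by rewrite fL_Fq // -/t t0 mul0r expr0n expn_eq0 /= addr0 sqrf_eq0.
have [z z_prim] := Fq_prim_root.
have tq1 : t ^+ (q - 1) = 1 by apply/eqP; rewrite -inFq_unity tFq t_neq0.
have uN1 : (t ^+ (2 ^ e)) ^+ (q - 1) = 1 by rewrite exprAC tq1 expr1n.
have solvable := exists_unity_root_mul_expr_eq1 (2 ^ e - 1) z_prim uN1.
rewrite -d_eq exprAC in solvable.
split=> [root_free | tn_neq1 y yFq y_neq0].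
  apply/eqP => tn1.
  have [y yN1 uy1] : exists2 y, y ^+ (q - 1) = 1 & t ^+ (2 ^ e) * y ^+ (2 ^ e - 1) = 1.
    by apply/solvable; rewrite tn1 expr1n.
  have /andP[yFq y_neq0] : inFq q y && (y != 0) by rewrite inFq_unity yN1.
  by move: (root_free y yFq y_neq0); rewrite fL_Fq_eq0 // -/t -/e uy1 eqxx.
rewrite fL_Fq_eq0 //; apply: contra tn_neq1 => /eqP uy1.
have yN1 : y ^+ (q - 1) = 1 by apply/eqP; rewrite -inFq_unity yFq y_neq0.
have /solvable/eqP : exists2 y, y ^+ (q - 1) = 1 & t ^+ (2 ^ e) * y ^+ (2 ^ e - 1) = 1.
  by exists y.
by rewrite -[X in _ == X](expr1n F (2 ^ e)) => /eqP/expr2k_inj ->.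
Qed.

Lemma qlin_preim_Fq_0 (a b c : F) : a + b + c = 0 ->
  qlin_preim_Fq a b c <-> injective (qlin (a + 1) (b + 1) (c + 1)).
Proof.
move=> abc0; have qlin1 y : qlin (a + 1) (b + 1) (c + 1) y = qlin a b c y + Tr q y.
  by rewrite /qlin /Tr; ring.
split=> [preimFq | qlin1_inj y qyFq].
  apply/(additive_injP (qlinD _ _ _)) => z /eqP.
  rewrite qlin1 addr_eq0 GRing.oppr_pchar2 // => /eqP qz.
  have zFq : inFq q z by apply: preimFq; rewrite qz inFq_Tr.
  by move: qz; rewrite qlin_Fq // abc0 mul0r Tr_Fq // => ->.
set r := qlin (a + 1) (b + 1) (c + 1) y.
have rFq : inFq q r by rewrite /r qlin1 inFqD ?inFq_Tr.
have <- : r = y by apply: qlin1_inj; rewrite [LHS]qlin1 qlin_Fq // abc0 mul0r add0r Tr_Fq.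
by [].
Qed.

Lemma qlin_inj_norm (a b c : F) :
  injective (qlin a b c) <->
  a ^+ (q ^ 2 + q + 1) + b ^+ (q ^ 2 + q + 1) + c ^+ (q ^ 2 + q + 1)
    + Tr q (a * b ^+ q * c ^+ (q ^ 2)) != 0.
Proof. by rewrite qlin_injP det_dickson_mx GRing.subr_pchar2. Qed.

Lemma qlin_add1_inj (a b c : F) : a + b + c = 0 ->
  injective (qlin (a + 1) (b + 1) (c + 1)) <->
  Tr q (a ^+ (q + 1) + a ^+ q * b + b ^+ (q + 1)) != 0.
Proof.
by move=> abc0; rewrite qlin_injP det_dickson_mx_add1 // mulrS mulr2n addrr_pchar2 // addr0.
Qed.

Lemma fL_inj_criterion (k : nat) (a b c : F) :
  injective (fL k a b c) <->
  ((a + b + c) ^+ ((q - 1) %/ (2 ^ sgcd k m - 1)) != 1 /\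
   ((inFq q (a + b + c) /\ a + b + c != 0 /\
     a ^+ (q ^ 2 + q + 1) + b ^+ (q ^ 2 + q + 1) + c ^+ (q ^ 2 + q + 1)
       + Tr q (a * b ^+ q * c ^+ (q ^ 2)) != 0)
    \/ (a + b + c = 0 /\ Tr q (a ^+ (q + 1) + a ^+ q * b + b ^+ (q + 1)) != 0))).
Proof.
rewrite fL_injP; have [t0 | t_neq0] := eqVneq (a + b + c) 0.
  have tFq : inFq q (a + b + c) by rewrite t0 inFq0.
  rewrite fL_Fq_root_freeP // qlin_preim_Fq_0 // qlin_add1_inj //.
  by split=> [[rf nz] | [rf [[_ []] | [_ nz]]]]; [split; last right | |].
have [tFq | tNFq] := boolP (inFq q (a + b + c)).
  rewrite fL_Fq_root_freeP // qlin_preim_Fq_unit // qlin_inj_norm.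
  split=> [[rf nz] | [rf [[_ [_ nz]] | [t0]]]]; [by split; last left | by [] |].
  by rewrite t0 eqxx in t_neq0.
split=> [[_ /qlin_preim_Fq_sum tFq] | [_ [[tF _] | [t0 _]]]] //.
- by rewrite tFq in tNFq.
- by rewrite t0 eqxx in t_neq0.
Qed.

End Char2.

End CubicExtension.

Theorem mainTheorem5 (F : finFieldType) (m k : nat) (a b c : F) :
  (1 <= m)%N -> #|F| = (2 ^ (3 * m))%N -> (k < m)%N ->
  let q := (2 ^ m)%N in
  let s := sgcd k m in
  bijective (fun x : F =>
      Tr q (x ^+ (q + 1)) + (a * x + b * x ^+ q + c * x ^+ (q ^ 2)%N) ^+ (2 ^ k)%N)
  <->
  ((a + b + c) ^+ ((q - 1) %/ (2 ^ s - 1))%N != 1 /\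
   ((inFq q (a + b + c) /\ a + b + c != 0 /\
     a ^+ (q ^ 2 + q + 1)%N + b ^+ (q ^ 2 + q + 1)%N + c ^+ (q ^ 2 + q + 1)%N
       + Tr q (a * b ^+ q * c ^+ (q ^ 2)%N) != 0)
    \/
    (a + b + c = 0 /\
     Tr q (a ^+ (q + 1) + a ^+ q * b + b ^+ (q + 1)) != 0))).
Proof.
move=> _ cardF _ q s.
have qF : [pchar F].-nat q by rewrite pnatX pnatE // (card_finPcharP cardF).
have cardFq : #|F| = (q ^ 3)%N by rewrite cardF -expnM mulnC.
apply: iff_trans (fL_inj_criterion qF cardFq (erefl q) k a b c).
by split; [exact: bij_inj | exact: injF_bij].
Qed.
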